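(* Let $(\Omega,\mathcal{F},\mathbb{P})$ be a probability space, let $N\in\mathbb{N}$, $\alpha\in\mathbb{R}$, $\varepsilon\in(0,1)$, $\delta\in(0,\varepsilon)$, let $X_1,\dots,X_N\colon\Omega\to(0,\infty)$ be random variables, and assume for all $i\in\{1,\dots,N\}$, $x\in(0,\infty)$ that $\mathbb{P}(N^\alpha X_i\le x)=[\tfrac2\pi]^{1/2}\int_0^x\exp(-\tfrac{y^2}{2})\,\mathrm{d}y$. Then $$\mathbb{P}\big(\max\{X_1,\dots,X_N\}\ge N^{-\alpha+\varepsilon}\big)\le(\varepsilon-\delta)^{-1}N^{-\delta}.$$ *)

From HB Require Import structures.
From mathcomp Require Import all_boot all_order all_algebra.
From mathcomp Require Export all_classical all_reals all_analysis.
Set Implicit Arguments. Unset Strict Implicit. Unset Printing Implicit Defensive.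

From HB Require Import structures.
From mathcomp Require Import all_boot all_order all_algebra.
From mathcomp Require Import all_classical all_reals all_analysis.
From mathcomp Require Import measurable_realfun ring lra.
Import Order.TTheory GRing.Theory Num.Theory.
Import numFieldNormedType.Exports.
Local Open Scope classical_set_scope.
Local Open Scope ring_scope.

(* Each Z_i := N^alpha X_i is half-normal, and integrating the Mills-ratio
   bound exp(-y^2/2) <= (y/c) exp(-y^2/2) over ]c, +oo[ gives
   P(Z_i > c) <= sqrt(2/pi) exp(-c^2/2) / c.  Since max_i X_i >= N^(eps-alpha)
   forces some Z_i > c := 99/100 N^eps, the union bound bounds the probability
   by N exp(-c^2/2) / c.  This is trivially enough when the target
   (eps-delta)^-1 N^-delta is at least 1; otherwise y := ln (eps-delta)^-1 is
   below delta ln N, and in logarithmic form the claim reduces to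
   (1 - a) L - y <= e^(u-1) - u <= 4/9 e^(2u) with L = ln N, u = eps L and
   a = eps - delta, which follows from t <= e^(t-1) and e >= 9/4. *)

Lemma measurable_set_bool d (T : measurableType d) (h : T -> bool) :
  measurable_fun setT h -> measurable [set w | h w].
Proof. by move=> mh; rewrite -[X in measurable X]setTI; exact: mh. Qed.

Section union_bound.
Context {d} {T : measurableType d} {R : realType}.
Variable mu : {content set T -> \bar R}.

Lemma content_bigsetU_le (I : Type) (r : seq I) (F : I -> set T) :
  (forall i, measurable (F i)) ->
  (mu (\big[setU/set0]_(i <- r) F i) <= \sum_(i <- r) mu (F i))%E.
Proof.
move=> mF; elim: r => [|i r IHr]; first by rewrite !big_nil measure0.
rewrite !big_cons; apply: le_trans (measureU2 _ _ _) _ => //.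
  exact: bigsetU_measurable.
exact: leeD2l.
Qed.

Lemma bigmax_ge_bigsetU (I : finType) (X : I -> T -> R) (t : R) : 0 < t ->
  [set w | t <= \big[Order.max/0]_i X i w] = \big[setU/set0]_i [set w | t <= X i w].
Proof.
move=> t0; apply/seteqP; split => w /=; rewrite -bigcup_seq.
- move/(bigmax_geP _ xpredT) => [|[i _ tX]]; first by rewrite leNgt t0.
  by exists i => //; rewrite /= mem_index_enum.
- by case=> i _ tX; apply/(bigmax_geP _ xpredT); right; exists i.
Qed.

Lemma measurable_bigmax_ge (I : finType) (X : I -> T -> R) (t : R) : 0 < t ->
  (forall i, measurable_fun setT (X i)) ->
  measurable [set w | t <= \big[Order.max/0]_i X i w].
Proof.
move=> t0 mX; rewrite bigmax_ge_bigsetU //; apply: bigsetU_measurable => i _.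
exact/measurable_set_bool/measurable_fun_ler.
Qed.

Lemma content_bigmax_ge_le (I : finType) (X : I -> T -> R) (t b : R) : 0 < t ->
  (forall i, measurable_fun setT (X i)) ->
  (forall i, (mu [set w | (t <= X i w)%R] <= b%:E)%E) ->
  (mu [set w | (t <= \big[Order.max/0]_i X i w)%R] <= (#|I|%:R * b)%:E)%E.
Proof.
move=> t0 mX muXb; rewrite bigmax_ge_bigsetU //.
apply: le_trans (content_bigsetU_le _ _ _ _) _ => [i|].
  exact/measurable_set_bool/measurable_fun_ler.
apply: le_trans (_ : _ <= \sum_(i : I) b%:E)%E _; first exact: lee_sum.
by rewrite sumEFin sumr_const mulr_natl.
Qed.

End union_bound.

Section tail_of_cdf.
Context {d} {T : measurableType d} {R : realType} {P : probability T R}.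
Context {Z : T -> R} {K : R} {f : R -> R}.
Hypotheses (mZ : measurable_fun setT Z) (K0 : 0 <= K).
Hypotheses (mf : measurable_fun setT f) (f0 : forall y, 0 <= f y).
Hypothesis cdfZ : forall x, 0 < x -> P [set w | Z w <= x] =
  (K%:E * \int[lebesgue_measure]_(y in `[0%R, x]) (f y)%:E)%E.

Let mEf : measurable_fun setT (EFin \o f). Proof. exact/measurable_EFinP. Qed.

Let mZle x : measurable [set w | Z w <= x].
Proof. exact/measurable_set_bool/measurable_fun_ler. Qed.

Let mZitv c x : measurable [set w | c < Z w <= x].
Proof.
apply/measurable_set_bool/measurable_and.
  exact/measurable_fun_ltr.
exact/measurable_fun_ler.
Qed.

Lemma probability_itv_oc c x : 0 < c -> c <= x ->
  P [set w | c < Z w <= x] =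
  (K%:E * \int[lebesgue_measure]_(y in `]c, x]) (f y)%:E)%E.
Proof.
move=> c0 cx; have x0 : 0 < x by exact: lt_le_trans cx.
have splitP : P [set w | Z w <= x] =
    (P [set w | (Z w <= c)%R] + P [set w | (c < Z w <= x)%R])%E.
  rewrite -measureU //; last first.
    by apply/seteqP; split => w //= [? /andP[? _]]; lra.
  congr (P _); apply/seteqP; split => w /=.
    by move=> zx; case: leP => _; [left|right].
  by case=> [|/andP[]//]; lra.
have splitI : (\int[lebesgue_measure]_(y in `[0%R, x]) (f y)%:E =
    \int[lebesgue_measure]_(y in `[0%R, c]) (f y)%:E +
    \int[lebesgue_measure]_(y in `]c, x]) (f y)%:E)%E.
  rewrite (@itv_bndbnd_setU _ _ _ (BRight c)) ?bnd_simp ?(ltW c0) //.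
  rewrite ge0_integral_setU //=.
  - exact: measurable_funS mEf.
  - by move=> y _; rewrite lee_fin.
  - rewrite disj_set2E; apply/eqP/seteqP; split => y //=.
    by rewrite !in_itv /= => -[/andP[_ ?] /andP[? _]]; lra.
have Pc_fin : P [set w | Z w <= c] \is a fin_num := fin_num_measure P _ (mZle c).
move: splitP Pc_fin; rewrite !cdfZ // splitI ge0_muleDr //; last 2 first.
- by apply: integral_ge0 => y _; rewrite lee_fin.
- by apply: integral_ge0 => y _; rewrite lee_fin.
move=> splitPI Pc_fin; rewrite -[LHS](addeK _ Pc_fin) (addeC (P _)) -splitPI.
by rewrite [X in (X - _)%E]addeC addeK.
Qed.

Lemma probability_gt_le c : 0 < c ->
  (P [set w | (c < Z w)%R] <=
   K%:E * \int[lebesgue_measure]_(y in `]c, +oo[) (f y)%:E)%E.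
Proof.
move=> c0; pose S n := [set w | c < Z w <= c + n%:R].
have mS n : measurable (S n) by exact: mZitv.
have S_le n : (P (S n) <= K%:E * \int[lebesgue_measure]_(y in `]c, +oo[) (f y)%:E)%E.
  rewrite probability_itv_oc ?lerDl //; apply: lee_wpmul2l; first by rewrite lee_fin.
  apply: ge0_subset_integral => //=; first exact: measurable_funS mEf.
  - by move=> y _; rewrite lee_fin.
  - by apply: subset_itvl; rewrite bnd_simp.
have S_nd : nondecreasing_seq S.
  move=> n m nm; apply/subsetPset => w /andP[cZ Zn]; apply/andP; split => //.
  by apply: le_trans Zn _; rewrite lerD2l ler_nat.
have -> : [set w | c < Z w] = \bigcup_n S n.
  apply/seteqP; split => w /=; last by case=> n _ /andP[].
  move=> cZ; exists (Num.truncn (Z w - c)).+1 => //=.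
  apply/andP; split => //.
  by rewrite -lerBlDl ltW // truncnS_gt.
have cvgPS := nondecreasing_cvg_mu (mu := P) mS (bigcupT_measurable _ mS) S_nd.
by rewrite -(cvg_lim _ cvgPS) //; apply: lime_le; [exact: cvgP cvgPS | exact: nearW].
Qed.

End tail_of_cdf.

Section gaussian_tail.
Context {R : realType}.
Local Notation gauss y := (expR (- (y ^+ 2) / 2)).

Lemma is_derive_gauss (y : R) : is_derive y 1 (fun t => gauss t) (- y * gauss y).
Proof.
have dsq : is_derive y (1 : R) (fun t : R => - (t ^+ 2) / 2) (- y).
  by apply: is_derive_eq; rewrite !scaler0 add0r /GRing.scale /=; lra.
by have := is_derive1_comp (is_derive_expR _) dsq; rewrite mulrC.
Qed.

Lemma continuous_gauss : continuous (fun y : R => gauss y).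
Proof.
move=> y; apply/differentiable_continuous/derivable1_diffP.
exact: (@ex_derive _ _ _ _ _ _ _ (is_derive_gauss y)).
Qed.

Lemma cvgy_gauss : gauss y @[y --> +oo] --> (0 : R).
Proof.
have -> : (fun y : R => gauss y) = (fun t => expR (- t)) \o (fun y : R => y ^+ 2 / 2).
  by apply/funext => y /=; rewrite mulNr.
apply: cvg_comp; last exact: cvgr_expR.
apply/cvgryPge => A; near=> y.
have y1 : 1 <= y by near: y; apply: nbhs_pinfty_ge; exact: num_real.
have y2A : 2 * A <= y by near: y; apply: nbhs_pinfty_ge; exact: num_real.
by rewrite ler_pdivlMr //; nra.
Unshelve. all: by end_near. Qed.

Lemma gauss_tail_le (c : R) : 0 < c ->
  (\int[lebesgue_measure]_(y in `]c, +oo[) (gauss y)%:E <= (gauss c / c)%:E)%E.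
Proof.
move=> c0; pose g y := y * gauss y / c; pose F y := - gauss y / c.
have mgauss : measurable_fun setT (fun y : R => gauss y).
  exact: continuous_measurable_fun continuous_gauss.
have cg : continuous g.
  move=> y; apply: cvgM; last exact: cvg_cst.
  by apply: cvgM; [exact: cvg_id | exact: continuous_gauss].
have mg : measurable_fun setT g := continuous_measurable_fun cg.
have g0 y : c <= y -> 0 <= g y.
  by move=> cy; rewrite /g !mulr_ge0 ?expR_ge0 ?invr_ge0 //; lra.
have dF y : is_derive y (1 : R) F (g y).
  apply: is_derive_eq; rewrite /F /g !scaler0 ?mulr0 ?add0r /GRing.scale /=.
  by field; rewrite gt_eqF.
have gauss_le_g : (\int[lebesgue_measure]_(y in `]c, +oo[) (gauss y)%:E <=
    \int[lebesgue_measure]_(y in `]c, +oo[) (g y)%:E)%E.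
  apply: ge0_le_integral => //=.
  - by apply/measurable_EFinP; exact: measurable_funS mgauss.
  - by apply/measurable_EFinP; exact: measurable_funS mg.
  move=> y; rewrite /= in_itv /= andbT => cy; rewrite lee_fin /g mulrAC.
  by rewrite ler_peMl ?expR_ge0 // ler_pdivlMr // mul1r ltW.
apply: (le_trans gauss_le_g).
apply: (@le_trans _ _ (\int[lebesgue_measure]_(y in `[c, +oo[) (g y)%:E)%E).
  apply: ge0_subset_integral => //=.
  - by apply/measurable_EFinP; exact: measurable_funS mg.
  - by move=> y; rewrite /= in_itv /= andbT => cy; rewrite lee_fin g0.
  - by apply: subset_itvr; rewrite bnd_simp.
rewrite (@ge0_continuous_FTC2y _ g F c 0) //.
- by rewrite sub0e -EFinN lee_fin /F -mulNr opprK.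
- exact: continuous_subspaceT.
- by have := cvgM (cvgN cvgy_gauss) (cvg_cst c^-1); rewrite oppr0 mul0r; apply.
- apply: cvg_at_right_filter; apply/differentiable_continuous/derivable1_diffP.
  exact: (@ex_derive _ _ _ _ _ _ _ (dF c)).
- by move=> y _; rewrite derive1E derive_val.
Qed.

(* The slack [c < b] is needed because the distribution function only
   controls the events [Z <= x], hence the strict tail [c < Z]. *)
Lemma half_normal_tail_le {d} {T : measurableType d} {P : probability T R}
    {Z : T -> R} {K : R} (b c : R) : measurable_fun setT Z -> 0 <= K ->
  (forall x, 0 < x -> P [set w | Z w <= x] =
     (K%:E * \int[lebesgue_measure]_(y in `[0%R, x]) (gauss y)%:E)%E) ->
  0 < c < b -> (P [set w | (b <= Z w)%R] <= (K * (gauss c / c))%:E)%E.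
Proof.
move=> mZ K0 cdfZ /andP[c0 cb].
have bZ_cZ : [set w | b <= Z w] `<=` [set w | c < Z w].
  by move=> w /= bZ; exact: lt_le_trans bZ.
apply: le_trans (le_measure P _ _ bZ_cZ) _; rewrite ?inE.
- exact/measurable_set_bool/measurable_fun_ler.
- exact/measurable_set_bool/measurable_fun_ltr.
have mgauss := continuous_measurable_fun continuous_gauss.
apply: le_trans (probability_gt_le mZ K0 mgauss (fun y => expR_ge0 _) cdfZ _ c0) _.
by rewrite EFinM lee_wpmul2l ?lee_fin // gauss_tail_le.
Qed.

End gaussian_tail.

Section real_estimates.
Context {R : realType}.

Lemma expRN1_le : expR (-1) <= 4 / 9 :> R.
Proof.
have e_half : 3 / 2 <= expR (1 / 2) :> R by have := @expR_ge1Dx R (1 / 2); lra.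
have e_ge : 9 / 4 <= expR 1 :> R.
  rewrite -[X in expR X](_ : 1 / 2 + 1 / 2 = 1 :> R) ?expRD; last lra.
  by nra.
by have := expRxMexpNx_1 (1 : R); have := expR_ge0 (-1 : R); nra.
Qed.

Lemma le_expR_subr1 (x : R) : x <= expR (x - 1).
Proof. by have := expR_ge1Dx (x - 1); lra. Qed.

Lemma sub_lnV_le_expR (a L u : R) : 0 < a < 1 -> ln a^-1 <= u - a * L ->
  (1 - a) * L - ln a^-1 <= expR (u - 1) - u.
Proof.
move=> /andP[a0 a1]; set y := ln a^-1 => slack.
have ey : expR y = a^-1 by rewrite lnK // posrE invr_gt0.
have lin : (1 - a) * L - y <= a^-1 * (u - y) - u.
  have : 0 <= (1 - a) / a * (u - y - a * L) by rewrite mulr_ge0 ?divr_ge0 //; lra.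
  have -> : (1 - a) / a * (u - y - a * L) = a^-1 * (u - y) - u - ((1 - a) * L - y).
    by field; rewrite gt_eqF.
  lra.
suff : a^-1 * (u - y) <= expR (u - 1) by lra.
rewrite -ey (_ : u - 1 = y + (u - y - 1)); last lra.
by rewrite expRD ler_wpM2l ?expR_ge0 // le_expR_subr1.
Qed.

Lemma gauss_ratio_union_le (N eps delta : R) :
  1 <= N -> 0 < delta < eps -> eps < 1 ->
  (eps - delta)^-1 * N `^ (- delta) < 1 ->
  N * (expR (- ((99 / 100 * N `^ eps) ^+ 2) / 2) / (99 / 100 * N `^ eps))
    <= (eps - delta)^-1 * N `^ (- delta).
Proof.
move=> N1 /andP[delta0 delta_eps] eps1.
have N0 : 0 < N by exact: lt_le_trans N1.
set L := ln N; have L0 : 0 <= L by rewrite ln_ge0.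
have powE r : N `^ r = expR (r * L) by rewrite /powR gt_eqF.
set a := eps - delta; have a0 : 0 < a by rewrite subr_gt0.
have ainv0 : a^-1 \is Num.pos by rewrite posrE invr_gt0.
set u := eps * L; have u0 : 0 <= u by rewrite mulr_ge0 // ltW // (lt_trans delta0).
rewrite !powE -/u mulNr expRN ltr_pdivrMr ?expR_gt0 // mul1r.
rewrite -[X in X < _](lnK ainv0) ltr_expR => small.
set k : R := 99 / 100; have k0 : 0 < k by rewrite /k; lra.
set c := k * expR u; have c0 : 0 < c by rewrite mulr_gt0 ?expR_gt0.
have lnc : ln c = ln k + u by rewrite lnM ?posrE ?expR_gt0 // expRK.
have -> : N * (expR (- c ^+ 2 / 2) / c) = expR (L - c ^+ 2 / 2 - ln c).
  by rewrite expRB expRD lnK ?posrE // lnK ?posrE // mulrA mulNr.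
rewrite -[X in X / _](lnK ainv0) -expRB ler_expR lnc.
have deltaL : delta * L = u - a * L by rewrite /u /a; ring.
have a_bnd : 0 < a < 1 by rewrite a0 /a; lra.
have slack : (1 - a) * L - ln a^-1 <= expR (u - 1) - u.
  by apply: sub_lnV_le_expR => //; lra.
have E1 : 1 <= expR u by have := expR_ge1Dx u; lra.
have E2 : 1 <= expR u ^+ 2 by rewrite expr_ge1 // (le_trans ler01).
have expRu1 : expR (u - 1) <= 4 / 9 * expR u ^+ 2.
  rewrite expRD expr2; have := @expRN1_le; have := expR_ge0 (-1 : R); nra.
have lnk : - (1 / 99) <= ln k.
  rewrite /k -[99 / 100](invrK) lnV ?posrE; last lra.
  by rewrite lerN2 (_ : (99 / 100)^-1 = 1 + 1 / 99 :> R) ?le_ln1Dx //; [lra | field].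
rewrite /c exprMn /k; lra.
Qed.

End real_estimates.

Theorem lemma2p34 (R : realType) (d : measure_display) (T : measurableType d)
  (P : probability T R) (N : nat) (alpha eps delta : R)
  (X : 'I_N -> T -> R) :
  (0 < N)%N ->
  0 < eps < 1 ->
  0 < delta < eps ->
  (forall i, measurable_fun setT (X i)) ->
  (forall i w, 0 < X i w) ->
  (forall i (x : R), 0 < x ->
     P [set w | N%:R `^ alpha * X i w <= x] =
     ((Num.sqrt (2 / pi))%:E *
       \int[lebesgue_measure]_(y in `[0%R, x]%classic) (expR (- (y ^+ 2) / 2))%:E)%E) ->
  (P [set w | (N%:R `^ (- alpha + eps) <= \big[Order.max/0]_(i < N) X i w)%R]
     <= ((eps - delta)^-1 * N%:R `^ (- delta))%:E)%E.
Proof.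
move=> N_gt0 /andP[_ eps1] delta_bnd mX _ cdfX.
have N1 : 1 <= N%:R :> R by rewrite ler1n.
have N0 : 0 < N%:R :> R by rewrite ltr0n.
set K := Num.sqrt (2 / pi : R); have K0 : 0 <= K := sqrtr_ge0 _.
have K1 : K <= 1.
  by rewrite -sqrtr1 ler_wsqrtr // ler_pdivrMr ?pi_gt0 // mul1r pi_ge2.
(* Any factor k < 1 with k^2/2 + ln k > 4/9 would do in place of 99/100. *)
set c := 99 / 100 * N%:R `^ eps; have c0 : 0 < c by rewrite mulr_gt0 ?powR_gt0.
set t := N%:R `^ (- alpha + eps); have t0 : 0 < t by rewrite powR_gt0.
have tail i : (P [set w | (t <= X i w)%R] <= (K * (expR (- (c ^+ 2) / 2) / c))%:E)%E.
  have Nt : N%:R `^ alpha * t = N%:R `^ eps.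
    rewrite -powRD ?addrA ?addrN ?add0r //.
    by rewrite pnatr_eq0 -lt0n N_gt0 implybT.
  have -> : [set w | t <= X i w] = [set w | N%:R `^ eps <= N%:R `^ alpha * X i w].
    by apply/seteqP; split => w /=; rewrite -Nt ler_pM2l ?powR_gt0.
  apply: half_normal_tail_le (cdfX i) _ => //.
    by apply: measurable_funM => //; exact: measurable_cst.
  by rewrite c0 /c; have := powR_gt0 eps N0; lra.
have [RHS_ge1|RHS_lt1] := leP 1 ((eps - delta)^-1 * N%:R `^ (- delta)).
  apply: le_trans (probability_le1 _ _) _; last by rewrite lee_fin.
  exact: measurable_bigmax_ge.
apply: le_trans (content_bigmax_ge_le P _ _ _ _ t0 mX tail) _; rewrite card_ord lee_fin.
apply: le_trans _ (gauss_ratio_union_le _ _ _ N1 delta_bnd eps1 RHS_lt1).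
by rewrite ler_wpM2l ?ler_piMl // divr_ge0 ?expR_ge0 // ltW.
Qed.
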